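(* For $n\ge 2$, the quantity $|\mathcal{I}^{(n)}_{p_k}(P_n^* )|$, as $k$ ranges over $1\le k\le n$, is maximized at $k=2$ and at $k=n-1$.
   Context: $\mathcal{I}^{(r)}_v(G)$ denotes the family of independent $r$-sets (sets of $r$ pairwise non-adjacent vertices) of a graph $G$ containing the vertex $v$. For a graph $G$ with vertices $x_1,\dots,x_n$, the pendant graph $G^*$ has vertex set $\{x_1,\dots,x_n\}\sqcup\{p_1,\dots,p_n\}$ and edge set $E(G)\sqcup\{x_1p_1,\dots,x_np_n\}$. $P_n$ is the path with vertices $x_1,\dots,x_n$ and edges $x_jx_{j+1}$, and $P_n^*$ its pendant graph. *)

From mathcomp Require Import all_boot.
Set Implicit Arguments. Unset Strict Implicit. Unset Printing Implicit Defensive.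

(* A simple graph is a symmetric irreflexive relation e on a finite vertex type. *)

Definition indep_rsets_at (T : finType) (e : rel T) (r : nat) (v : T) : {set {set T}} :=
  [set A : {set T} | [&& #|A| == r, v \in A &
                         [forall x in A, forall y in A, ~~ e x y]]].

(* Pendant graph G^*: vertices inl x = x_i (original) and inr x = p_i (pendant),
   edges E(G) plus x_i p_i. *)
Definition pendant_rel (T : finType) (e : rel T) : rel (T + T) :=
  fun u v => match u, v with
             | inl x, inl y => e x y
             | inl x, inr y => x == y
             | inr x, inl y => x == y
             | inr _, inr _ => false
             end.

(* The path P_n on vertices 'I_n (x_{j+1} is the ordinal j), edges x_j x_{j+1}. *)
Definition path_rel (n : nat) : rel 'I_n :=
  fun i j => (i.+1 == j :> nat) || (j.+1 == i :> nat).

(* The pendant vertex p_k (1-based k) is inr (k-1). *)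
Definition pendant_count (n : nat) (k : 'I_n) : nat :=
  #|indep_rsets_at (pendant_rel (@path_rel n)) n (inr k)|.

From mathcomp Require Import all_boot.
From mathcomp Require Import zify.
Set Implicit Arguments. Unset Strict Implicit. Unset Printing Implicit Defensive.

(* The n edges x_i p_i of P_n^* form a perfect matching, so an
   independent n-set of P_n^* picks exactly one endpoint of each of them.
   Recording "x_i is picked" as a boolean t_i, such sets are exactly the
   boolean n-tuples with no two consecutive trues ("sparse" tuples), and the
   set contains p_k iff t_k is false.  Writing F m for the number of sparse
   boolean sequences of length m (so F 0 = 1, F 1 = 2 and F satisfies the
   Fibonacci recurrence), the sparse sequences of length n with a false at
   position k split into independent sparse blocks of lengths k and n-1-k,
   whence |I^{(n)}_{p_k}(P_n^* )| = F k * F (n-1-k).  The theorem then follows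
   from the Fibonacci inequality F k * F j <= F 1 * F (k+j-1) for k + j > 0,
   since both k = 1 and k = n-2 realize the right-hand side. *)

Fixpoint bool_seqs (n : nat) : seq (seq bool) :=
  if n is m.+1 then map (cons true) (bool_seqs m) ++ map (cons false) (bool_seqs m)
  else [:: [::]].

Fixpoint sparse (s : seq bool) : bool :=
  if s is b :: s' then ~~ (b && head false s') && sparse s' else true.

Lemma sparseP s : sparse s <-> (forall i, ~~ (nth false s i && nth false s i.+1)).
Proof.
elim: s => [|b s IH] /=; first by split => // _ [|i].
split.
  by move=> /andP [hb /IH hs] [|i] /=; [rewrite nth0 | exact: hs].
move=> h; apply/andP; split; first by have := h 0; rewrite /= nth0.
by apply/IH => i; exact: (h i.+1).
Qed.

Lemma count_bool_seqsS n (P : pred (seq bool)) :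
  count P (bool_seqs n.+1) = count (fun s => P (true :: s)) (bool_seqs n)
                             + count (fun s => P (false :: s)) (bool_seqs n).
Proof. by rewrite /= count_cat !count_map. Qed.

Lemma count_none (T : Type) (P : pred T) (l : seq T) : (forall s, P s = false) -> count P l = 0.
Proof. by move=> hP; elim: l => //= x l ->; rewrite hP. Qed.

(* F n: the number of sparse sequences of length n (the Fibonacci number f_{n+2}). *)
Definition nsparse (n : nat) : nat := count sparse (bool_seqs n).

Lemma nsparse0 : nsparse 0 = 1. Proof. by []. Qed.
Lemma nsparse1 : nsparse 1 = 2. Proof. by []. Qed.

(* A sparse sequence starts with false, or with true followed by false. *)
Lemma nsparseSS n : nsparse n.+2 = nsparse n.+1 + nsparse n.
Proof.
rewrite /nsparse count_bool_seqsS [in RHS]addnC; congr addn.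
by rewrite count_bool_seqsS /= count_none.
Qed.

Definition nsparse_gap (n k : nat) : nat :=
  count (fun s => sparse s && ~~ nth false s k) (bool_seqs n).

Lemma nsparse_gap0 n : nsparse_gap n.+1 0 = nsparse n.
Proof.
rewrite /nsparse_gap count_bool_seqsS count_none ?add0n => [|s]; last by rewrite /= andbF.
by apply: eq_count => s /=; rewrite andbT.
Qed.

Lemma nsparse_gap1 n : nsparse_gap n.+2 1 = 2 * nsparse n.
Proof.
rewrite /nsparse_gap !count_bool_seqsS /= count_none // add0n.
rewrite [X in _ + (X + _)]count_none => [|s]; last by rewrite andbF.
by rewrite add0n addnn -mul2n (eq_count (a2 := sparse)) // => s; rewrite andbT.
Qed.

Lemma nsparse_gapSS n k : nsparse_gap n.+2 k.+2 = nsparse_gap n k + nsparse_gap n.+1 k.+1.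
Proof.
by rewrite /nsparse_gap count_bool_seqsS; congr addn; rewrite count_bool_seqsS /= count_none.
Qed.

(* A false entry at position k cuts a sparse sequence into two independent
   sparse blocks, of lengths k and n-1-k. *)
Lemma nsparse_gapE n k : k < n -> nsparse_gap n k = nsparse k * nsparse (n.-1 - k).
Proof.
elim/ltn_ind: k n => -[|[|k]] IH [|[|n]] //= hk.
- by rewrite nsparse_gap0 nsparse0 mul1n subn0.
- by rewrite nsparse_gap1 nsparse1 subSS subn0.
rewrite nsparse_gapSS !IH //; try lia.
have -> : n.+1 - k.+2 = n.-1 - k by lia.
have -> : (n.+1).-1 - k.+1 = n.-1 - k by lia.
by rewrite nsparseSS mulnDl addnC.
Qed.

Lemma nsparseS_le n : nsparse n.+1 <= 2 * nsparse n.
Proof.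
case: n => // -[|n] //; rewrite nsparseSS mul2n -addnn leq_add2l.
by rewrite nsparseSS leq_addr.
Qed.

Lemma nsparse_mul_leS k j : nsparse k * nsparse j.+1 <= 2 * nsparse (k + j).
Proof.
elim/ltn_ind: k j => -[|[|k]] IH j.
- by rewrite nsparse0 mul1n nsparseS_le.
- by [].
rewrite nsparseSS mulnDl !addSn nsparseSS mulnDr leq_add //.
  by rewrite -addSn IH.
by rewrite IH.
Qed.

Lemma nsparse_mul_le k j : 0 < k + j -> nsparse k * nsparse j <= 2 * nsparse (k + j).-1.
Proof.
case: j => [|j] hkj; last by rewrite addnS nsparse_mul_leS.
case: k hkj => // k _; rewrite nsparse0 muln1 addn0; exact: nsparseS_le.
Qed.

Lemma bool_seqs_uniq n : uniq (bool_seqs n).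
Proof.
elim: n => //= n IH; rewrite cat_uniq !map_inj_uniq ?IH //= => [|x y [] //|x y [] //].
by rewrite andbT; apply/hasPn => _ /mapP [u _ ->]; apply/mapP => -[].
Qed.

Lemma mem_bool_seqs n s : (s \in bool_seqs n) = (size s == n).
Proof.
elim: n s => [|n IH] [|b s] //=; rewrite mem_cat.
  by apply/negP => /orP [] /mapP [].
have cons_inj (c : bool) : injective (cons c) by move=> x y [].
have notin (c c' : bool) (l : seq (seq bool)) t :
    c != c' -> (c :: t \in map (cons c') l) = false.
  by move=> /negbTE neq; apply/mapP => -[u _ [ecc' _]]; rewrite ecc' eqxx in neq.
by rewrite eqSS -IH; case: b; rewrite mem_map // notin ?orbF.
Qed.

Lemma card_tuple_pred n (P : pred (seq bool)) :
  #|[set t : n.-tuple bool | P t]| = count P (bool_seqs n).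
Proof.
rewrite cardsE cardE /enum_mem size_filter -enumT.
rewrite (eq_count (a2 := preim val P)) // -count_map.
apply/permP; apply: uniq_perm.
- by rewrite (map_inj_uniq val_inj) enum_uniq.
- exact: bool_seqs_uniq.
move=> s; rewrite mem_bool_seqs; apply/mapP/idP => [[t _ ->]|/eqP hs].
  by rewrite size_tuple.
have hs' : size s == n by rewrite hs.
by exists (Tuple hs'); rewrite // mem_enum.
Qed.

Section PathTransversals.
Variable n : nat.
Local Notation V := ('I_n + 'I_n)%type.
Local Notation Pstar := (pendant_rel (@path_rel n)).

Definition transversal (t : n.-tuple bool) : {set V} :=
  [set (if tnth t i then inl i else inr i) | i : 'I_n].

Lemma inl_transversal t j : (inl j \in transversal t) = tnth t j.
Proof.
apply/imsetP/idP => [[i _]|tj]; last by exists j => //; rewrite tj.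
by case: ifP => // ti [->].
Qed.

Lemma inr_transversal t j : (inr j \in transversal t) = ~~ tnth t j.
Proof.
apply/imsetP/idP => [[i _]|tj]; last by exists j => //; rewrite (negbTE tj).
by case: ifP => // ti [->]; rewrite ti.
Qed.

Lemma card_transversal t : #|transversal t| = n.
Proof.
rewrite card_imset ?card_ord // => i j.
by case: ifP; case: ifP => // _ _ [].
Qed.

Lemma transversal_inj : injective transversal.
Proof.
move=> t1 t2 h; apply: eq_from_tnth => i.
by rewrite -inl_transversal h inl_transversal.
Qed.

(* Only path edges x_i x_{i+1} can lie inside a transversal, and sparsity
   forbids them. *)
Lemma transversal_indep (t : n.-tuple bool) : sparse t ->
  forall x y, x \in transversal t -> y \in transversal t -> ~~ Pstar x y.
Proof.
move/sparseP => hs [i|i] [j|j]; rewrite ?inl_transversal ?inr_transversal /= => hi hj //.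
- rewrite /path_rel; apply/negP => /orP [] /eqP eij.
    by have := hs i; rewrite -!(tnth_nth false) eij -(tnth_nth false t j) hi hj.
  by have := hs j; rewrite -(tnth_nth false t j) eij -(tnth_nth false t i) hi hj.
- by apply/eqP => eij; move: hj; rewrite -eij hi.
- by apply/eqP => eij; move: hi; rewrite eij hj.
Qed.

(* An independent n-set A of P_n^* meets every edge x_i p_i, so it is the
   transversal of the sparse tuple recording which x_i lie in A. *)
Lemma indep_transversal (A : {set V}) :
  #|A| = n -> (forall x y, x \in A -> y \in A -> ~~ Pstar x y) ->
  exists2 t : n.-tuple bool, sparse t & A = transversal t.
Proof.
move=> cardA indepA; pose t := [tuple inl i \in A | i < n].
have tE i : tnth t i = (inl i \in A) by rewrite tnth_mktuple.
exists t.
  apply/sparseP => i; apply/negP => /andP [h1 h2].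
  have hi1 : i.+1 < n.
    by rewrite ltnNge; apply: contraTN h2 => hle; rewrite nth_default ?size_tuple.
  have hi : i < n := ltnW hi1.
  move: h1 h2; rewrite -(tnth_nth false t (Ordinal hi)) -(tnth_nth false t (Ordinal hi1)).
  by rewrite !tE => /indepA/[apply]; rewrite /= /path_rel /= eqxx.
apply/eqP; rewrite eqEcard card_transversal cardA leqnn andbT.
apply/subsetP => -[i|i] iA; rewrite ?inl_transversal ?inr_transversal tE //.
by apply/negP => iA'; have := indepA _ _ iA' iA; rewrite /= eqxx.
Qed.

Lemma indep_rsets_pendant_path (k : 'I_n) :
  indep_rsets_at Pstar n (inr k) =
  transversal @: [set t : n.-tuple bool | sparse t && ~~ nth false t k].
Proof.
apply/setP => A; rewrite inE; apply/idP/imsetP.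
  move=> /and3P [/eqP cardA kA /forall_inP indepA].
  have [t ts eA] := indep_transversal cardA (fun x y xA yA => forall_inP (indepA x xA) y yA).
  move: kA; rewrite eA inr_transversal (tnth_nth false) => tk.
  by exists t; rewrite // inE ts tk.
move=> [t]; rewrite inE => /andP [ts tk] ->.
rewrite card_transversal eqxx inr_transversal (tnth_nth false) tk /=.
by apply/forall_inP => x xA; apply/forall_inP => y yA; exact: (transversal_indep ts).
Qed.

End PathTransversals.

Lemma pendant_countE n (k : 'I_n) : pendant_count k = nsparse k * nsparse (n.-1 - k).
Proof.
rewrite /pendant_count indep_rsets_pendant_path card_imset; last exact: transversal_inj.
rewrite (card_tuple_pred _ (fun s => sparse s && ~~ nth false s k)).
exact: nsparse_gapE.
Qed.

Theorem corollary1 (n : nat) (hn : 2 <= n) (a b : 'I_n)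
    (ha : nat_of_ord a = 1) (hb : nat_of_ord b = n - 2) :
  forall k : 'I_n, pendant_count k <= pendant_count a /\ pendant_count k <= pendant_count b.
Proof.
move=> k; rewrite !pendant_countE ha hb.
have -> : n.-1 - (n - 2) = 1 by lia.
have -> : n.-1 - 1 = n - 2 by lia.
rewrite nsparse1 (mulnC (nsparse (n - 2))).
suff le_k : nsparse k * nsparse (n.-1 - k) <= 2 * nsparse (n - 2) by [].
have hk := ltn_ord k.
have -> : n - 2 = (k + (n.-1 - k)).-1 by lia.
by apply: nsparse_mul_le; lia.
Qed.
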